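(* Let $U,V$ be nonlocal vertex algebras, $R(x)$ a twisting operator for $(U,V)$, and $U\otimes_RV$ the twisted tensor product. Then the $\mathcal D$-operator of $U\otimes_RV$ is $\mathcal D\otimes1+1\otimes\mathcal D$ (where the two $\mathcal D$'s are those of $U$ and $V$). Moreover, for $u\in U$, $v\in V$ (identified with $u\otimes\mathbf 1$ and $\mathbf 1\otimes v$), $$Y_R(u,x)v\in(U\otimes V)[[x]],$$ and, writing $R(x)(v\otimes u)=\sum_{i=1}^r u_i\otimes v_i\otimes f_i(x)$ with $u_i\in U$, $v_i\in V$, $f_i\in\mathbb C((x))$, $$Y_R(v,x)u=e^{x(\mathcal D\otimes1+1\otimes\mathcal D)}\sum_{i=1}^r f_i(-x)\,Y_R(u_i,-x)v_i .$$
   Context: All vector spaces are over $\mathbb{C}$. A nonlocal vertex algebra is a vector space $V$ with a linear map $Y(\cdot,x):V\to \mathrm{Hom}(V,V((x)))$, $v\mapsto Y(v,x)=\sum_{n\in\mathbb Z}v_nx^{-n-1}$, and a vector $\mathbf 1\in V$ such that for all $v$: $Y(\mathbf 1,x)v=v$, $Y(v,x)\mathbf 1\in V[[x]]$, $\lim_{x\to0}Y(v,x)\mathbf 1=v$; and for all $u,v,w$ there is $k\ge0$ with $(x_0+x_2)^kY(u,x_0+x_2)Y(v,x_2)w=(x_0+x_2)^kY(Y(u,x_0)v,x_2)w$. Write $Y(x)(u\otimes v)=Y(u,x)v$. The $\mathcal D$-operator is $\mathcal Dv=v_{-2}\mathbf 1$. Conventions: $f(x_1\pm x_2)$ for $f\in\mathbb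 C((x))$ is expanded in nonnegative powers of the second variable; $T^{ij}$ denotes a map $T$ acting on the $i$-th and $j$-th tensor factors; maps are extended linearly over scalar series. Twisting operator for $(U,V)$: a linear map $R(x):V\otimes U\to U\otimes V\otimes\mathbb C((x))$ such that $R(x)(v\otimes\mathbf 1)=\mathbf 1\otimes v$, $R(x)(\mathbf 1\otimes u)=u\otimes\mathbf 1$, $R(x_1)(1\otimes Y(x_2))=(Y(x_2)\otimes1)R^{23}(x_1)R^{12}(x_1+x_2)$ on $V\otimes U\otimes U$, and $R(x_1)(Y(x_2)\otimes 1)=(1\otimes Y(x_2))R^{12}(x_1-x_2)R^{23}(x_1)$ on $V\otimes V\otimes U$. Twisted tensor product $U\otimes_RV$: the nonlocal vertex algebra on $U\otimes V$ with vacuum $\mathbf 1\otimes\mathbf 1$ and $Y_R(u\otimes v,x)(u'\otimes v')=\sum_i f_i(-x)Y(u,x)u'_i\otimes Y(v_i,x)v'$ where $R(x)(v\otimes u')=\sum_i u'_i\otimes v_i\otimes f_i(x)$ (i.e. $Y_R(x)=(Y(x)\otimes Y(x))R^{23}(-x)$). Elements $u\in U$, $v\in V$ are identified with $u\otimes\mathbf 1$, $\mathbf 1\otimes v$, which embeds $U$ and $V$ as subalgebras. *)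

From mathcomp Require Import all_boot all_order all_algebra.
From mathcomp Require Import complex Rstruct.
From Stdlib Require Import ClassicalEpsilon.

Set Implicit Arguments.
Unset Strict Implicit.
Unset Printing Implicit Defensive.
Import Order.TTheory GRing.Theory Num.Theory.
Local Open Scope ring_scope.

Definition C : fieldType := (Rdefinitions.R)[i].

Section Defs.
Variable K : fieldType.

Definition zpart (T : zmodType) (M : nat) (F : int -> T) : T :=
  \sum_(i < (2 * M).+1) F (i%:Z - M%:Z).
Definition zsum (T : zmodType) (F : int -> T) : T :=
  epsilon (inhabits 0)
    (fun s => exists N : nat, forall M : nat, (N <= M)%N -> zpart M F = s).
Definition nsum (T : zmodType) (F : nat -> T) : T :=
  epsilon (inhabits 0)
    (fun s => exists N : nat, forall M : nat, (N <= M)%N -> \sum_(i < M) F i = s).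

(* a series f is given by its coefficients: f n = coefficient of x^n *)
Definition laurent (f : int -> K) : Prop :=
  exists N : int, forall n : int, n < N -> f n = 0.
Definition sgnp (n : int) : K := if odd `|n|%N then -1 else 1.
Definition fneg (f : int -> K) : int -> K := fun n => sgnp n * f n.
Definition gbin (n : int) (j : nat) : K :=
  (\prod_(i < j) ((n - i%:Z)%:~R : K)) / (j`!)%:R.
(* coefficient of x1^c x2^e in f(x1 + x2) (expanded in nonnegative powers
   of x2) *)
Definition fplus (f : int -> K) (c e : int) : K :=
  if 0 <= e then f (c + e) * gbin (c + e) `|e|%N else 0.
(* coefficient of x1^c x2^e in f(x1 - x2) *)
Definition fminus (f : int -> K) (c e : int) : K := sgnp e * fplus f c e.

(* Y v w n = v_n w, the coefficient of x^(-n-1) in Y(v,x)w *)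
Section NVA.
Variable W : lmodType K.
Variable Y : W -> W -> int -> W.
Variable vac : W.

(* coefficient of x^m in Y(v,x)w *)
Definition Yx (v w : W) (m : int) : W := Y v w (- m - 1).

(* coefficient of x0^a x2^b in (x0+x2)^k Y(u,x0+x2)Y(v,x2)w *)
Definition wa_lhs (k : nat) (u v w : W) (a b : int) : W :=
  zsum (fun j : int => if 0 <= j then
          gbin (a + j) `|j|%N *: Y u (Y v w (j - b - 1)) (k%:Z - 1 - j - a)
        else 0).
(* coefficient of x0^a x2^b in (x0+x2)^k Y(Y(u,x0)v,x2)w *)
Definition wa_rhs (k : nat) (u v w : W) (a b : int) : W :=
  zsum (fun j : int => if (0 <= j) && (j <= k%:Z) then
          ('C(k, `|j|%N))%:R *: Y (Y u v (k%:Z - j - a - 1)) w (j - b - 1)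
        else 0).

Record nva : Prop := NVA {
  Y_linl : forall (w : W) (n : int) (c : K) (u1 u2 : W),
      Y (c *: u1 + u2) w n = c *: Y u1 w n + Y u2 w n;
  Y_linr : forall (u : W) (n : int) (c : K) (w1 w2 : W),
      Y u (c *: w1 + w2) n = c *: Y u w1 n + Y u w2 n;
  Y_trunc : forall u w : W, exists N : int, forall n : int, N <= n -> Y u w n = 0;
  Y_vac : forall (v : W) (n : int), Y vac v n = if n == -1 then v else 0;
  Y_create : forall (v : W) (n : int), 0 <= n -> Y v vac n = 0;
  Y_create_lim : forall v : W, Y v vac (-1) = v;
  Y_weak_assoc : forall u v w : W, exists k : nat, forall a b : int,
      wa_lhs k u v w a b = wa_rhs k u v w a b
}.

Definition Dop (v : W) : W := Y v vac (-2).
End NVA.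

Definition lin (W : lmodType K) (f : W -> K) : Prop :=
  forall (c : K) (x y : W), f (c *: x + y) = c * f x + f y.

(* An element of U (x) V is represented through its pairing with pairs of
   linear functionals (alpha, beta) on U and V: the tensor sum_i u_i (x) v_i
   is  fun alpha beta => sum_i alpha u_i * beta v_i.  Two such elements are
   equal in U (x) V iff they agree on all pairs of linear functionals. *)
Definition tens (U V : lmodType K) := (U -> K) -> (V -> K) -> K.
Definition tp (U V : lmodType K) (u : U) (v : V) : tens U V :=
  fun al be => al u * be v.
Definition tzero (U V : lmodType K) : tens U V := fun _ _ => 0.
Definition teq (U V : lmodType K) (s t : tens U V) : Prop :=
  forall (al : U -> K) (be : V -> K), lin al -> lin be -> s al be = t al be.

(* An element sum_i u_i (x) v_i (x) f_i(x) of U (x) V (x) C((x)) is given by the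
   list of triples (u_i, v_i, f_i);  t3c s n is its x^n coefficient in U (x) V. *)
Definition t3c (U V : lmodType K) (s : seq (U * V * (int -> K))) (n : int)
  : tens U V :=
  fun al be => \sum_(t <- s) t.2 n * (al t.1.1 * be t.1.2).
Definition t3eq (U V : lmodType K) (s s' : seq (U * V * (int -> K))) : Prop :=
  forall n : int, teq (t3c s n) (t3c s' n).
Definition laurent_list (U V : lmodType K) (s : seq (U * V * (int -> K))) : Prop :=
  forall t, List.In t s -> laurent t.2.
Definition t3add (U V : lmodType K) (s s' : seq (U * V * (int -> K))) := s ++ s'.
Definition t3scale (U V : lmodType K) (c : K) (s : seq (U * V * (int -> K))) :=
  [seq (t.1, fun n => c * t.2 n) | t <- s].

Section Twist.
Variables U V : lmodType K.
Variable YU : U -> U -> int -> U.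
Variable vU : U.
Variable YV : V -> V -> int -> V.
Variable vV : V.
(* R v u = a list of triples representing R(x)(v (x) u) *)
Variable R : V -> U -> seq (U * V * (int -> K)).

(* coefficient of x1^a x2^b of  R(x1)(1 (x) Y(x2)) (v (x) u (x) u') *)
Definition hex1_lhs (v : V) (u u' : U) (a b : int) : tens U V :=
  t3c (R v (Yx YU u u' b)) a.
(* coefficient of x1^a x2^b of (Y(x2) (x) 1) R^23(x1) R^12(x1+x2) (v (x) u (x) u') *)
Definition hex1_rhs (v : V) (u u' : U) (a b : int) : tens U V :=
  fun al be => \sum_(t <- R v u) \sum_(t2 <- R t.1.2 u')
    zsum (fun e => zsum (fun c =>
      fplus t.2 c e * t2.2 (a - c) * (al (Yx YU t.1.1 t2.1.1 (b - e)) * be t2.1.2))).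
(* coefficient of x1^a x2^b of  R(x1)(Y(x2) (x) 1) (v (x) v' (x) u) *)
Definition hex2_lhs (v v' : V) (u : U) (a b : int) : tens U V :=
  t3c (R (Yx YV v v' b) u) a.
(* coefficient of x1^a x2^b of (1 (x) Y(x2)) R^12(x1-x2) R^23(x1) (v (x) v' (x) u) *)
Definition hex2_rhs (v v' : V) (u : U) (a b : int) : tens U V :=
  fun al be => \sum_(t <- R v' u) \sum_(t2 <- R v t.1.1)
    zsum (fun e => zsum (fun c =>
      fminus t2.2 c e * t.2 (a - c) * (al t2.1.1 * be (Yx YV t2.1.2 t.1.2 (b - e))))).

Record twisting : Prop := Twisting {
  R_laurent : forall v u, laurent_list (R v u);
  R_linl : forall (u : U) (c : K) (v1 v2 : V),
      t3eq (R (c *: v1 + v2) u) (t3add (t3scale c (R v1 u)) (R v2 u));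
  R_linr : forall (v : V) (c : K) (u1 u2 : U),
      t3eq (R v (c *: u1 + u2)) (t3add (t3scale c (R v u1)) (R v u2));
  R_vacU : forall v : V, t3eq (R v vU) [:: (vU, v, fun n : int => if n == 0 then 1 else 0)];
  R_vacV : forall u : U, t3eq (R vV u) [:: (u, vV, fun n : int => if n == 0 then 1 else 0)];
  R_hex1 : forall (v : V) (u u' : U) (a b : int), teq (hex1_lhs v u u' a b) (hex1_rhs v u u' a b);
  R_hex2 : forall (v v' : V) (u : U) (a b : int), teq (hex2_lhs v v' u a b) (hex2_rhs v v' u a b)
}.

(* Twisted tensor product vertex operator:
   YR u v u' v' m = coefficient of x^m in Y_R(u (x) v, x)(u' (x) v')
     = sum_i f_i(-x) Y(u,x)u'_i (x) Y(v_i,x)v',  R(x)(v (x) u') = sum_i u'_i (x) v_i (x) f_i(x) *)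
Definition YR (u : U) (v : V) (u' : U) (v' : V) (m : int) : tens U V :=
  fun al be => \sum_(t <- R v u') zsum (fun p => zsum (fun q =>
     fneg t.2 p * (al (Yx YU u t.1.1 q) * be (Yx YV t.1.2 v' (m - p - q))))).
(* bilinear extension to general elements of U (x) V given as lists of pairs *)
Definition YRl (w w' : seq (U * V)) (m : int) : tens U V :=
  fun al be => \sum_(x <- w) \sum_(y <- w') YR x.1 x.2 y.1 y.2 m al be.
(* D-operator of U (x)_R V:  w_{-2}(1 (x) 1) = coefficient of x^1 in Y_R(w,x)(1 (x) 1) *)
Definition DR (w : seq (U * V)) : tens U V := YRl w [:: (vU, vV)] 1.
Definition DD (w : seq (U * V)) : tens U V :=
  fun al be => \sum_(x <- w)
    (al (Dop YU vU x.1) * be x.2 + al x.1 * be (Dop YV vV x.2)).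
(* the operator D (x) 1 + 1 (x) D acting on the pairing representation *)
Definition Tt (w : tens U V) : tens U V :=
  fun al be => w (fun u => al (Dop YU vU u)) be + w al (fun v => be (Dop YV vV v)).
(* coefficient of x^k of  sum_i f_i(-x) Y_R(u_i,-x) v_i,  for s = [(u_i,v_i,f_i)] *)
Definition Gser (s : seq (U * V * (int -> K))) (k : int) : tens U V :=
  fun al be => \sum_(t <- s) zsum (fun p =>
     fneg t.2 p * fneg (fun n => YR t.1.1 vV vU t.1.2 n al be) (k - p)).
(* coefficient of x^m of e^{x(D (x) 1 + 1 (x) D)} Gser s *)
Definition expD_G (s : seq (U * V * (int -> K))) (m : int) : tens U V :=
  fun al be => nsum (fun j : nat =>
     (j`!%:R)^-1 * iter j Tt (Gser s (m - j%:Z)) al be).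
End Twist.
End Defs.

From mathcomp Require Import all_boot all_order all_algebra.
From mathcomp Require Import complex Rstruct.
From mathcomp Require Import zify ring.
From Stdlib Require Import ClassicalEpsilon FunctionalExtensionality.

Set Implicit Arguments.
Unset Strict Implicit.
Unset Printing Implicit Defensive.
Import Order.TTheory GRing.Theory Num.Theory.
Local Open Scope ring_scope.

(* Since R(x)(v (x) 1) = 1 (x) v, we get Y_R(u (x) v, x)(1 (x) 1) = Y(u,x)1 (x) Y(v,x)1
   and Y_R(u, x)v = Y(u,x)1 (x) v; the first two claims are read off from
   Y(u,x)1 = u + x Du + ... .  For the third, Y_R(v,x)u = sum_i f_i(-x) u_i (x) Y(v_i,x)1
   while Y_R(u_i,-x)v_i = Y(u_i,-x)1 (x) v_i, so it suffices that
   e^{x(D (x) 1 + 1 (x) D)} (Y(a,-x)1 (x) b) = a (x) Y(b,x)1.  Coefficientwise this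
   is an induction driven by D(a_{-n-1}1) = (n+1) a_{-n-2}1, which is weak
   associativity for (a, 1, 1).  Tensors are compared through pairs of linear
   functionals, and Y_R only depends on the tensor R(x)(v (x) u), not on the
   list chosen to represent it. *)

Section FiniteSums.
Variable T : zmodType.
Implicit Types (F G : int -> T) (M : nat).

Lemma eq_zpart M F G : F =1 G -> zpart M F = zpart M G.
Proof. by move=> eFG; apply: eq_bigr => i _; rewrite eFG. Qed.

Lemma eq_zsum F G : F =1 G -> zsum F = zsum G.
Proof. by move=> eFG; congr zsum; apply: functional_extensionality. Qed.

Lemma zpart0 M : zpart M (fun=> 0 : T) = 0.
Proof. by rewrite /zpart big1. Qed.

Lemma zpart_sum (I : Type) (r : seq I) M (F : I -> int -> T) :
  zpart M (fun i => \sum_(x <- r) F x i) = \sum_(x <- r) zpart M (F x).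
Proof. by rewrite /zpart exchange_big. Qed.

Lemma zpartS M F : zpart M.+1 F = F (- M.+1%:Z) + zpart M F + F M.+1%:Z.
Proof.
rewrite /zpart (_ : (2 * M.+1).+1 = ((2 * M).+1).+2); last by lia.
rewrite big_ord_recl big_ord_recr /= -addrA sub0r; congr (_ + (_ + F _)).
  by apply: eq_bigr => i _; congr F; rewrite /bump /= add1n; lia.
by rewrite /bump /= add1n; lia.
Qed.

Lemma zsum_eventually F s :
  (exists N : nat, forall M, (N <= M)%N -> zpart M F = s) -> zsum F = s.
Proof.
move=> [N HN]; rewrite /zsum.
have [N' HN'] := epsilon_spec (inhabits (0 : T))
  (fun s => exists N : nat, forall M, (N <= M)%N -> zpart M F = s)
  (ex_intro _ s (ex_intro _ N HN)).
by rewrite -(HN' (maxn N N')) ?leq_maxr // HN // leq_maxl.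
Qed.

Lemma zsum_zpart M F :
  (forall i, i < - M%:Z \/ M%:Z < i -> F i = 0) -> zsum F = zpart M F.
Proof.
move=> suppF; apply: zsum_eventually; exists M; elim=> [|M' IH].
  by rewrite leqn0 => /eqP ->.
rewrite leq_eqVlt => /orP [/eqP <- //|]; rewrite ltnS => leMM'.
by rewrite zpartS -(IH leMM') !suppF ?addr0 ?add0r //; lia.
Qed.

Lemma zsum_single F (j : int) : (forall i : int, i != j -> F i = 0) -> zsum F = F j.
Proof.
move=> Fj; rewrite (@zsum_zpart (absz j)); last by move=> i Hi; apply: Fj; apply/eqP; lia.
have hj : (absz (j + (absz j)%:Z)%R < (2 * absz j).+1)%N by lia.
rewrite /zpart (bigD1 (Ordinal hj)) //= big1 ?addr0; first by congr F; lia.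
by move=> i /eqP neqi; apply: Fj; apply/eqP => eqi; apply: neqi; apply: val_inj => /=; lia.
Qed.

Lemma zsum0 : zsum (fun=> 0 : T) = 0.
Proof. exact: (@zsum_single _ 0). Qed.

Lemma zsum01 F : (forall i, i != 0 -> i != 1 -> F i = 0) -> zsum F = F 0 + F 1.
Proof.
move=> F01; rewrite (@zsum_zpart 1); last by move=> i Hi; apply: F01; apply/eqP; lia.
by rewrite /zpart !big_ord_recr big_ord0 /= add0r F01 ?add0r.
Qed.

Lemma zsum2_zpart (G : int -> int -> T) (A B D : int) :
  (forall p q, p < A \/ q < B \/ D < p + q -> G p q = 0) ->
  forall M, (`|A| + `|B| + `|D| <= M)%N ->
  zsum (fun p => zsum (G p)) = zpart M (fun p => zpart M (G p)).
Proof.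
move=> suppG M leM.
rewrite (@eq_zsum _ (fun p => zpart M (G p))); last first.
  move=> p; apply: zsum_zpart => q Hq.
  by case: (ltP p A) => hp; apply: suppG; [left | right; lia].
apply: zsum_zpart => p Hp; rewrite -(zpart0 M); apply: eq_zpart => q.
by case: (ltP q B) => hq; apply: suppG; [right; left | lia].
Qed.

Lemma nsum_big_ord (F : nat -> T) J :
  (forall j, (J <= j)%N -> F j = 0) -> nsum F = \sum_(j < J) F j.
Proof.
move=> FJ.
have partial_sums K : (J <= K)%N -> \sum_(i < K) F i = \sum_(j < J) F j.
  elim: K => [|K IH]; first by rewrite leqn0 => /eqP ->.
  rewrite leq_eqVlt => /orP [/eqP <- //|]; rewrite ltnS => leJK.
  by rewrite big_ord_recr /= FJ // addr0 IH.
rewrite /nsum.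
have [N' HN'] := epsilon_spec (inhabits (0 : T))
  (fun s => exists N : nat, forall M, (N <= M)%N -> \sum_(i < M) F i = s)
  (ex_intro _ _ (ex_intro _ J partial_sums)).
by rewrite -(HN' (maxn J N')) ?leq_maxr // partial_sums // leq_maxl.
Qed.

Lemma eq_big_In (X : Type) (s : seq X) (F G : X -> T) :
  (forall t, List.In t s -> F t = G t) -> \sum_(t <- s) F t = \sum_(t <- s) G t.
Proof.
elim: s => [|a s IH] eFG; first by rewrite !big_nil.
rewrite !big_cons eFG /=; last by left.
by rewrite IH // => t ht; apply: eFG; right.
Qed.
End FiniteSums.

Lemma eventually_all_In (X : Type) (P : nat -> X -> Prop) (l : seq X) :
  (forall t, List.In t l -> exists M0, forall M, (M0 <= M)%N -> P M t) ->
  exists M0, forall M, (M0 <= M)%N -> forall t, List.In t l -> P M t.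
Proof.
elim: l => [|a l IH] evP; first by exists 0%N.
have [Ma Ha] := evP a (or_introl erefl).
have [Ml Hl] := IH (fun t ht => evP t (or_intror ht)).
exists (maxn Ma Ml) => M HM t [<-|ht].
  by apply: Ha; apply: leq_trans HM; rewrite leq_maxl.
by apply: Hl => //; apply: leq_trans HM; rewrite leq_maxr.
Qed.

Section NonlocalVertexAlgebra.
Variables (K : fieldType) (W : lmodType K) (Y : W -> W -> int -> W) (vac : W).
Hypothesis HY : nva Y vac.

Lemma Y0l w n : Y 0 w n = 0.
Proof.
have := Y_linl HY w n 1 0 0; rewrite !scale1r addr0 => e.
by apply: (addrI (Y 0 w n)); rewrite addr0 -e.
Qed.

Lemma Y0r u n : Y u 0 n = 0.
Proof.
have := Y_linr HY u n 1 0 0; rewrite !scale1r addr0 => e.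
by apply: (addrI (Y u 0 n)); rewrite addr0 -e.
Qed.

Lemma Yx_vacl v q : Yx Y vac v q = if q == 0 then v else 0.
Proof. by rewrite /Yx (Y_vac HY); congr (if _ then _ else _); apply/eqP/eqP; lia. Qed.

Lemma Yx_vacr0 v : Yx Y v vac 0 = v.
Proof. by rewrite /Yx sub0r (Y_create_lim HY). Qed.

Lemma Yx_vacr_neg v n : n < 0 -> Yx Y v vac n = 0.
Proof. by move=> n_lt0; rewrite /Yx (Y_create HY) //; lia. Qed.

(* Weak associativity for (v, 1, 1): on each side only two terms survive. *)
Lemma Dop_Yx_vacr_nat v (n : nat) :
  Dop Y vac (Yx Y v vac n) = n.+1%:R *: Yx Y v vac n.+1.
Proof.
have [k wa] := Y_weak_assoc HY v vac vac.
have lhs : wa_lhs Y k v vac vac (n%:Z + k%:Z) 1 = (n + k).+1%:R *: Yx Y v vac n.+1.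
  rewrite /wa_lhs (@zsum_single _ _ 1) /=; last first.
    move=> i ne_i1; case: ifP => // _.
    rewrite (Y_vac HY); case: eqP => [|_]; last by rewrite Y0r scaler0.
    by move/eqP: ne_i1; lia.
  rewrite (Y_vac HY) /= /gbin big_ord1 divr1 /Yx.
  congr (_ *: Y _ _ _); last by lia.
  by rewrite (_ : n%:Z + k%:Z + 1 - _ = (n + k).+1%:Z) //=; lia.
have rhs : wa_rhs Y k v vac vac (n%:Z + k%:Z) 1 =
           Dop Y vac (Yx Y v vac n) + k%:R *: Yx Y v vac n.+1.
  rewrite /wa_rhs zsum01 /=; last first.
    move=> i ne_i0 ne_i1; case: ifP => // /andP [i_ge0 i_lek].
    by rewrite (Y_create HY) ?scaler0 //; move/eqP: ne_i0; move/eqP: ne_i1; lia.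
  rewrite bin0 scale1r (Y_create_lim HY) /Dop /Yx; congr (Y (Y _ _ _) _ _ + _).
    by lia.
  case: k {wa lhs} => [|k] /=; first by rewrite scale0r.
  by rewrite bin1; congr (_ *: Y _ _ _); lia.
have := wa (n%:Z + k%:Z) 1; rewrite lhs rhs => e.
apply: (addIr (k%:R *: Yx Y v vac n.+1)); rewrite -e -scalerDl -natrD.
by congr (_%:R *: _); lia.
Qed.

Lemma Dop_Yx_vacr v (k : int) :
  Dop Y vac (Yx Y v vac k) = (k + 1)%:~R *: Yx Y v vac (k + 1).
Proof.
case: k => [n|n]; first by rewrite Dop_Yx_vacr_nat -addn1.
rewrite Yx_vacr_neg ?NegzE //.
rewrite /Dop Y0l; case: n => [|n]; first by rewrite addNr scale0r.
by rewrite Yx_vacr_neg ?scaler0 //; lia.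
Qed.
End NonlocalVertexAlgebra.

Lemma sgnpD1 (K : fieldType) (k : int) : sgnp K (k + 1) = - sgnp K k.
Proof.
rewrite /sgnp (_ : odd (absz (k + 1)) = ~~ odd (absz k)); first by case: odd; rewrite ?opprK.
by case: k => [n|[|n]] //=; rewrite ?addn1 ?subn1 //= negbK.
Qed.

Section LinearFunctionals.
Variables (K : fieldType) (W : lmodType K).
Implicit Types al : W -> K.

Lemma lin0 al : lin al -> al 0 = 0.
Proof.
move=> linal; have := linal 1 0 0; rewrite scaler0 addr0 mul1r => e.
by apply: (addrI (al 0)); rewrite addr0 -e.
Qed.

Lemma linZ al c x : lin al -> al (c *: x) = c * al x.
Proof. by move=> linal; rewrite -[c *: x]addr0 linal lin0 ?addr0. Qed.

Lemma lin_Yr Y vac al u n : nva Y vac -> lin al -> lin (fun z => al (Y u z n)).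
Proof. by move=> HY linal c x y; rewrite /= (Y_linr HY) linal. Qed.

Lemma lin_Yl Y vac al w n : nva Y vac -> lin al -> lin (fun z => al (Y z w n)).
Proof. by move=> HY linal c x y; rewrite /= (Y_linl HY) linal. Qed.
End LinearFunctionals.

Section TwistedTensorProduct.
Variables (K : fieldType) (U V : lmodType K).
Variables (YU : U -> U -> int -> U) (vU : U) (YV : V -> V -> int -> V) (vV : V).
Variable R : V -> U -> seq (U * V * (int -> K)).
Hypotheses (HU : nva YU vU) (HV : nva YV vV) (HR : twisting YU vU YV vV R).

Local Notation triples := (seq (U * V * (int -> K))).
Local Notation TT := (Tt YU vU YV vV).
Local Notation DU := (Dop YU vU).
Local Notation DV := (Dop YV vV).

Definition YRlist (s : triples) (u : U) (v' : V) (m : int) : tens U V :=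
  fun al be => \sum_(t <- s) zsum (fun p => zsum (fun q =>
     fneg t.2 p * (al (Yx YU u t.1.1 q) * be (Yx YV t.1.2 v' (m - p - q))))).

Lemma YR_YRlist u v u' v' m : YR YU YV R u v u' v' m = YRlist (R v u') u v' m.
Proof. by []. Qed.

Lemma YRlist_zpart s u v' m al be : laurent_list s -> lin al -> lin be ->
  exists M0, forall M, (M0 <= M)%N ->
  YRlist s u v' m al be = zpart M (fun p => zpart M (fun q =>
     sgnp K p * t3c s p (fun z => al (Yx YU u z q)) (fun y => be (Yx YV y v' (m - p - q))))).
Proof.
move=> lau_s linal linbe.
pose term (t : U * V * (int -> K)) p q :=
  fneg t.2 p * (al (Yx YU u t.1.1 q) * be (Yx YV t.1.2 v' (m - p - q))).
have [M0 HM0] : exists M0, forall M, (M0 <= M)%N -> forall t, List.In t s ->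
    zsum (fun p => zsum (term t p)) = zpart M (fun p => zpart M (term t p)).
  apply: eventually_all_In => t /lau_s [Nt HNt].
  have [N1 H1] := Y_trunc HU u t.1.1.
  have [N2 H2] := Y_trunc HV t.1.2 v'.
  exists (absz Nt + absz (- N1)%R + absz (m + N2)%R)%N => M HM.
  apply: (@zsum2_zpart _ (term t) Nt (- N1) (m + N2)) => // p q [h|[h|h]]; rewrite /term.
  - by rewrite /fneg HNt // mulr0 mul0r.
  - by rewrite /Yx H1 ?lin0 ?mul0r ?mulr0 //; lia.
  - by rewrite /Yx H2 ?lin0 ?mulr0 //; lia.
exists M0 => M HM.
rewrite /YRlist (eq_big_In (G := fun t => zpart M (fun p => zpart M (term t p)))); last exact: HM0.
rewrite -zpart_sum; apply: eq_zpart => p; rewrite -zpart_sum; apply: eq_zpart => q.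
by rewrite /t3c mulr_sumr; apply: eq_bigr => t _; rewrite mulrA.
Qed.

Lemma YRlist_teq s s' u v' m al be :
  laurent_list s -> laurent_list s' -> t3eq s s' -> lin al -> lin be ->
  YRlist s u v' m al be = YRlist s' u v' m al be.
Proof.
move=> lau_s lau_s' ss' linal linbe.
have [M1 H1] := YRlist_zpart u v' m lau_s linal linbe.
have [M2 H2] := YRlist_zpart u v' m lau_s' linal linbe.
rewrite (H1 (maxn M1 M2)) ?leq_maxl // (H2 (maxn M1 M2)) ?leq_maxr //.
apply: eq_zpart => p; apply: eq_zpart => q; congr (_ * _).
by apply: ss'; [apply: (lin_Yr _ _ HU) | apply: (lin_Yl _ _ HV)].
Qed.

Definition delta0 : int -> K := fun n => if n == 0 then 1 else 0.

Lemma YRlist_delta0 a u b v' m al be :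
  YRlist [:: (a, b, delta0)] u v' m al be =
  zsum (fun q => al (Yx YU u a q) * be (Yx YV b v' (m - q))).
Proof.
rewrite /YRlist big_seq1 (@zsum_single _ _ 0); last first.
  move=> p p_neq0; rewrite -zsum0; apply: eq_zsum => q.
  by rewrite /fneg /delta0 /= (negbTE p_neq0) mulr0 mul0r.
by apply: eq_zsum => q; rewrite /fneg /delta0 /= mulr1 subr0 /sgnp /= mul1r.
Qed.

Lemma YRlist_R_vacr v u v' m al be : lin al -> lin be ->
  YRlist (R v vU) u v' m al be = YRlist [:: (vU, v, delta0)] u v' m al be.
Proof.
move=> linal linbe; apply: YRlist_teq => //; first exact: (R_laurent HR).
  by move=> t [<-|//]; exists 0 => n n_lt0; rewrite /delta0 /= ifF //; apply/eqP; lia.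
exact: (R_vacU HR).
Qed.

Lemma YR_vacuum_D u v al be : lin al -> lin be ->
  YR YU YV R u v vU vV 1 al be = al (DU u) * be v + al u * be (DV v).
Proof.
move=> linal linbe; rewrite YR_YRlist YRlist_R_vacr // YRlist_delta0 zsum01; last first.
  move=> q q_neq0 q_neq1; case: (ltP q 0) => q_sign.
    by rewrite Yx_vacr_neg ?lin0 ?mul0r.
  by rewrite (Yx_vacr_neg HV) ?lin0 ?mulr0 //; move/eqP: q_neq0; move/eqP: q_neq1; lia.
by rewrite (Yx_vacr0 HU) subr0 subrr (Yx_vacr0 HV) addrC.
Qed.

Lemma YR_creation u v n al be : lin al -> lin be ->
  YR YU YV R u vV vU v n al be = al (Yx YU u vU n) * be v.
Proof.
move=> linal linbe; rewrite YR_YRlist YRlist_R_vacr // YRlist_delta0.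
rewrite (@zsum_single _ _ n) ?(Yx_vacl HV) ?subrr //.
by move=> q q_neqn; rewrite (Yx_vacl HV) ifF ?lin0 ?mulr0 //; apply/eqP; move/eqP: q_neqn; lia.
Qed.

Lemma YRlist_vac s m al be : lin al -> lin be ->
  YRlist s vU vV m al be = \sum_(t <- s) zsum (fun p =>
     fneg t.2 p * (al t.1.1 * be (Yx YV t.1.2 vV (m - p)))).
Proof.
move=> linal linbe; apply: eq_bigr => t _; apply: eq_zsum => p.
rewrite (@zsum_single _ _ 0) ?(Yx_vacl HU) ?subr0 //.
by move=> q q_neq0; rewrite (Yx_vacl HU) (negbTE q_neq0) lin0 // mul0r mulr0.
Qed.

Lemma lin_DU al : lin al -> lin (fun u => al (DU u)).
Proof. exact: (lin_Yl _ _ HU). Qed.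

Lemma lin_DV be : lin be -> lin (fun v => be (DV v)).
Proof. exact: (lin_Yl _ _ HV). Qed.

Lemma iterT_teq (w1 w2 : tens U V) : teq w1 w2 ->
  forall j al be, lin al -> lin be -> iter j TT w1 al be = iter j TT w2 al be.
Proof.
move=> w12; elim=> [|j IH] al be linal linbe /=; first exact: w12.
by rewrite /Tt !IH //; [exact: lin_DV | exact: lin_DU].
Qed.

Lemma iterT_eq0 (w : tens U V) : teq w (@tzero K U V) ->
  forall j al be, lin al -> lin be -> iter j TT w al be = 0.
Proof.
move=> w0; elim=> [|j IH] al be linal linbe /=; first exact: w0.
by rewrite /Tt !IH ?addr0 //; [exact: lin_DV | exact: lin_DU].
Qed.

Lemma iterT_sum (I : Type) (r : seq I) (F : I -> tens U V) j al be :
  iter j TT (fun al be => \sum_(i <- r) F i al be) al be =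
  \sum_(i <- r) iter j TT (F i) al be.
Proof. by elim: j al be => [|j IH] al be //=; rewrite /Tt !IH -big_split. Qed.

Lemma iterT_add (w1 w2 : tens U V) j al be :
  iter j TT (fun al be => w1 al be + w2 al be) al be =
  iter j TT w1 al be + iter j TT w2 al be.
Proof. by elim: j al be => [|j IH] al be //=; rewrite /Tt !IH addrACA. Qed.

Lemma iterT_scale (c : K) (w : tens U V) j al be :
  iter j TT (fun al be => c * w al be) al be = c * iter j TT w al be.
Proof. by elim: j al be => [|j IH] al be //=; rewrite /Tt !IH mulrDr. Qed.

Lemma iterT_DV (w : tens U V) j al be :
  iter j TT (fun al be => w al (fun v => be (DV v))) al be =
  iter j TT w al (fun v => be (DV v)).
Proof. by elim: j al be => [|j IH] al be //=; rewrite /Tt !IH. Qed.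

(* Coefficient of x^k in Y(x, -x)1 (x) y. *)
Definition Yopp_vac (x : U) (y : V) (k : int) : tens U V :=
  fun al be => sgnp K k * (al (Yx YU x vU k) * be y).

Lemma Yopp_vac_DU x y k al be : lin al ->
  Yopp_vac x y k (fun u => al (DU u)) be = - (k + 1)%:~R * Yopp_vac x y (k + 1) al be.
Proof. by move=> linal; rewrite /Yopp_vac (Dop_Yx_vacr HU) linZ // sgnpD1; ring. Qed.

Lemma Yopp_vac_DV x y k al be : lin al ->
  Yopp_vac x y k al (fun v => be (DV v)) =
  TT (Yopp_vac x y k) al be + (k + 1)%:~R * Yopp_vac x y (k + 1) al be.
Proof. by move=> linal; rewrite /Tt Yopp_vac_DU //; ring. Qed.

Lemma Yopp_vac_neg x y k : k < 0 -> teq (Yopp_vac x y k) (@tzero K U V).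
Proof.
by move=> k_lt0 al be linal _; rewrite /Yopp_vac (Yx_vacr_neg HU) // lin0 // mul0r mulr0.
Qed.

(* Coefficient of x^m in e^{x Tt} w, keeping only the terms Tt^j w with j < J. *)
Definition expT (w : int -> tens U V) (J : nat) (m : int) : tens U V :=
  fun al be => \sum_(j < J) (j`!%:R)^-1 * iter j TT (w (m - j%:Z)) al be.

Definition vanish_below (s : triples) (N : int) :=
  forall t n, List.In t s -> n < N -> t.2 n = 0.

Lemma laurent_list_vanish_below s : laurent_list s -> exists N, vanish_below s N.
Proof.
elim: s => [|a s IH] lau_s; first by exists 0.
have [N1 H1] := lau_s a (or_introl erefl).
have [N2 H2] := IH (fun t ht => lau_s t (or_intror ht)).
exists (N1 - `|N1| - `|N2|) => t n [<-|ht] lt_nN; first by apply: H1; lia.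
by apply: (H2 t) => //; lia.
Qed.

Lemma Gser_zpart s N k M al be : lin al -> lin be -> vanish_below s N ->
  (`|N| + `|k| <= M)%N ->
  Gser YU vU YV vV R s k al be =
  \sum_(t <- s) zpart M (fun p => fneg t.2 p * Yopp_vac t.1.1 t.1.2 (k - p) al be).
Proof.
move=> linal linbe sN le_M; apply: eq_big_In => t ht.
rewrite -(@zsum_zpart _ M); last first.
  move=> p p_out; case: (ltP p N) => [lt_pN|le_Np]; first by rewrite /fneg sN // mulr0 mul0r.
  by rewrite Yopp_vac_neg ?mulr0 //; lia.
by apply: eq_zsum => p; rewrite [X in _ * X]/fneg YR_creation.
Qed.

Lemma Gser_eq0 s N k : vanish_below s N -> k < N ->
  teq (Gser YU vU YV vV R s k) (@tzero K U V).
Proof.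
move=> sN lt_kN al be linal linbe.
rewrite (@Gser_zpart s N k (`|N| + `|k|)) // (eq_big_In (G := fun=> 0)) ?big1 // => t ht.
rewrite -(zpart0 _ (`|N| + `|k|)); apply: eq_zpart => p.
case: (ltP p N) => [lt_pN|le_Np]; first by rewrite /fneg sN // mulr0 mul0r.
by rewrite Yopp_vac_neg ?mulr0 //; lia.
Qed.

Lemma iterT_Gser s N k M j al be : lin al -> lin be -> vanish_below s N ->
  (`|N| + `|k| <= M)%N ->
  iter j TT (Gser YU vU YV vV R s k) al be =
  \sum_(t <- s) zpart M (fun p => fneg t.2 p * iter j TT (Yopp_vac t.1.1 t.1.2 (k - p)) al be).
Proof.
move=> linal linbe sN le_M.
rewrite (@iterT_teq _ (fun al be => \sum_(t <- s) zpart M (fun p =>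
    fneg t.2 p * Yopp_vac t.1.1 t.1.2 (k - p) al be))) //; last first.
  by move=> al' be' linal' linbe'; rewrite (Gser_zpart linal' linbe' sN le_M).
rewrite iterT_sum; apply: eq_bigr => t _; rewrite /zpart iterT_sum.
by apply: eq_bigr => i _; rewrite iterT_scale.
Qed.

Section CharacteristicZero.
Hypothesis K_char0 : [pchar K] =i pred0.

Lemma natrS_neq0 (n : nat) : n.+1%:R != 0 :> K.
Proof. by move/pcharf0P: K_char0 => ->. Qed.

(* Splitting the weight n + 1 = j + (n + 1 - j) and shifting the first part down
   one index matches the two terms produced by 1 (x) D. *)
Lemma expT_Yopp_vac_rec x y (n : nat) al be : lin al -> lin be ->
  n.+1%:R * expT (Yopp_vac x y) n.+2 n.+1 al be =
  expT (Yopp_vac x y) n.+1 n al (fun v => be (DV v)).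
Proof.
move=> linal linbe; pose w := Yopp_vac x y.
pose term j := (j`!%:R)^-1 * iter j TT (w (n.+1%:Z - j%:Z)) al be.
rewrite /expT big_distrr /=.
transitivity (\sum_(j < n.+2) (j%:R * term j + (n.+1 - j)%N%:R * term j)).
  by apply: eq_bigr => j _; rewrite -mulrDl -natrD subnKC // -ltnS.
rewrite big_split /= big_ord_recl [X in _ + X]big_ord_recr /= subnn.
rewrite !mul0r add0r addr0 -big_split /=; apply: eq_bigr => j _.
have DV_shift : teq (fun al be => w (n%:Z - j%:Z) al (fun v => be (DV v)))
    (fun al be => TT (w (n%:Z - j%:Z)) al be +
                  (n%:Z - j%:Z + 1)%:~R * w (n%:Z - j%:Z + 1) al be).
  by move=> al' be' linal' _; exact: Yopp_vac_DV.
rewrite -iterT_DV (iterT_teq DV_shift) // iterT_add iterT_scale.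
rewrite /term /bump leq0n add1n -iterSr.
have := ltn_ord j => lt_jn.
rewrite (_ : n.+1%:Z - j.+1%:Z = n%:Z - j%:Z); last by lia.
rewrite (_ : n.+1%:Z - j%:Z = n%:Z - j%:Z + 1); last by lia.
rewrite (_ : n%:Z - j%:Z + 1 = (n.+1 - j)%N%:Z); last by lia.
rewrite factS natrM invfM -mulrA mulVKf ?natrS_neq0 // [RHS]mulrDr.
by congr (_ + _); rewrite mulrCA.
Qed.

Lemma expT_Yopp_vac_nat x y (n : nat) al be : lin al -> lin be ->
  expT (Yopp_vac x y) n.+1 n al be = al x * be (Yx YV y vV n).
Proof.
elim: n al be => [|n IH] al be linal linbe.
  by rewrite /expT big_ord1 /Yopp_vac /= (Yx_vacr0 HU) (Yx_vacr0 HV) invr1 !mul1r.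
apply: (mulfI (natrS_neq0 n)).
rewrite expT_Yopp_vac_rec // IH //; last exact: lin_DV.
by rewrite (Dop_Yx_vacr_nat HV) linZ // mulrCA.
Qed.

Lemma expT_Yopp_vac x y (N : int) (J : nat) al be : lin al -> lin be -> N < J%:Z ->
  expT (Yopp_vac x y) J N al be = al x * be (Yx YV y vV N).
Proof.
move=> linal linbe; case: N => [n|n] lt_NJ.
  rewrite -(expT_Yopp_vac_nat x y n linal linbe) /expT.
  rewrite [RHS](big_ord_widen J (fun j => (j`!%:R)^-1 *
    iter j TT (Yopp_vac x y (n%:Z - j%:Z)) al be)); last by lia.
  rewrite [RHS]big_mkcond /=; apply: eq_bigr => j _; case: ltnP => // le_nj.
  by rewrite iterT_eq0 ?mulr0 //; apply: Yopp_vac_neg; lia.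
rewrite (Yx_vacr_neg HV) ?lin0 ?mulr0 // /expT big1 // => j _.
by rewrite iterT_eq0 ?mulr0 //; apply: Yopp_vac_neg; lia.
Qed.

Lemma expD_G_expansion s N m (J M : nat) al be : lin al -> lin be ->
  vanish_below s N -> m < N + J%:Z -> (`|N| + `|m| + J <= M)%N ->
  expD_G YU vU YV vV R s m al be =
  \sum_(t <- s) zpart M (fun p => fneg t.2 p * expT (Yopp_vac t.1.1 t.1.2) J (m - p) al be).
Proof.
move=> linal linbe sN lt_m le_M.
rewrite /expD_G (@nsum_big_ord _ _ J); last first.
  by move=> j le_Jj; rewrite iterT_eq0 ?mulr0 //; apply: Gser_eq0 sN _; lia.
rewrite (eq_bigr (fun j : 'I_J => \sum_(t <- s) zpart M (fun p => fneg t.2 p *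
    ((j`!%:R)^-1 * iter j TT (Yopp_vac t.1.1 t.1.2 (m - p - j%:Z)) al be)))); last first.
  move=> j _; rewrite (@iterT_Gser s N _ M) //; last by have := ltn_ord j; lia.
  rewrite big_distrr; apply: eq_bigr => t _; rewrite /zpart big_distrr.
  by apply: eq_bigr => i _; rewrite mulrCA addrAC.
rewrite exchange_big; apply: eq_bigr => t _; rewrite /zpart exchange_big.
by apply: eq_bigr => i _; rewrite /expT big_distrr.
Qed.

Lemma YR_vac_expansion u v s N m (J M : nat) al be : lin al -> lin be ->
  laurent_list s -> t3eq s (R v u) -> vanish_below s N ->
  m < N + J%:Z -> (`|N| + `|m| <= M)%N ->
  YR YU YV R vU v u vV m al be =
  \sum_(t <- s) zpart M (fun p => fneg t.2 p * expT (Yopp_vac t.1.1 t.1.2) J (m - p) al be).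
Proof.
move=> linal linbe lau_s sR sN lt_m le_M.
rewrite YR_YRlist -(YRlist_teq _ _ _ lau_s (R_laurent HR (v:=v) (u:=u)) sR) // YRlist_vac //.
apply: eq_big_In => t ht; rewrite (@zsum_zpart _ M); last first.
  move=> p p_out; case: (ltP p N) => [lt_pN|le_Np]; first by rewrite /fneg sN // mulr0 mul0r.
  by rewrite (Yx_vacr_neg HV) ?lin0 ?mulr0 //; lia.
apply: eq_zpart => p; case: (ltP p N) => [lt_pN|le_Np]; first by rewrite /fneg sN // mulr0 !mul0r.
by rewrite expT_Yopp_vac //; lia.
Qed.

Lemma YR_skew u v s : laurent_list s -> t3eq s (R v u) ->
  forall m, teq (YR YU YV R vU v u vV m) (expD_G YU vU YV vV R s m).
Proof.
move=> lau_s sR m al be linal linbe.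
have [N sN] := laurent_list_vanish_below lau_s.
pose J := (`|m - N|).+1; pose M := (`|N| + `|m| + J)%N.
rewrite (@YR_vac_expansion u v s N m J M) ?(@expD_G_expansion s N m J M) //; lia.
Qed.
End CharacteristicZero.
End TwistedTensorProduct.

Lemma pchar_C : [pchar C] =i pred0.
Proof. exact: (@pchar_num (Rdefinitions.R[i])). Qed.

Theorem proposition2p5
  (U V : lmodType C)
  (YU : U -> U -> int -> U) (vU : U)
  (YV : V -> V -> int -> V) (vV : V)
  (R : V -> U -> seq (U * V * (int -> C))) :
  nva YU vU -> nva YV vV -> twisting YU vU YV vV R ->
  (* the D-operator of U (x)_R V is D (x) 1 + 1 (x) D *)
  (forall w : seq (U * V),
      teq (DR YU vU YV vV R w) (DD YU vU YV vV w)) /\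
  (* Y_R(u,x)v lies in (U (x) V)[[x]] *)
  (forall (u : U) (v : V) (m : int), m < 0 ->
      teq (YR YU YV R u vV vU v m) (@tzero C U V)) /\
  (* skew-symmetry type formula, for any decomposition s of R(x)(v (x) u) *)
  (forall (u : U) (v : V) (s : seq (U * V * (int -> C))),
      laurent_list s -> t3eq s (R v u) ->
      forall m : int,
        teq (YR YU YV R vU v u vV m) (expD_G YU vU YV vV R s m)).
Proof.
move=> HU HV HR; split; [|split].
- move=> w al be linal linbe; apply: eq_bigr => x _.
  by rewrite big_seq1 (YR_vacuum_D HU HV HR).
- move=> u v m m_lt0 al be linal linbe.
  by rewrite (YR_creation HU HV HR) // (Yx_vacr_neg HU) // lin0 // mul0r.
- exact: (YR_skew HU HV HR pchar_C).
Qed.
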